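(* Let $\mathbf G$ be a group, let $G_{<\infty}$ be the set of its elements of finite order, and let $\Phi$ be the finite-order component of $\mathcal G(\mathbf G)$. Assume $\lvert\mathrm{Cen}(\Phi)\rvert=1$. Let $x\in G_{<\infty}$ be such that the $\equiv$-class $[x]_\equiv$ of $x$ in $\Phi$ is not a single $\approx$-class (i.e. $[x]_\equiv$ is a complex or infinitely complex $\equiv$-class). Then the closed neighborhood of $x$ in $\mathcal G(\mathbf G)$ equals the closed neighborhood of $x$ in $\mathcal G_e(\mathbf G)$.
   Context: All graphs are simple. For a group $\mathbf G$: the power graph $\mathcal G(\mathbf G)$ has vertex set $G$, and distinct $x,y$ are adjacent iff $y=x^n$ or $x=y^n$ for some $n\in\mathbb Z\setminus\{0\}$ (so the identity is not adjacent to elements of infinite order). The enhanced power graph $\mathcal G_e(\mathbf G)$ has vertex set $G$, and distinct $x,y$ are adjacent iff there are $z\in G$ and $n,m\in\mathbb Z$ with $x=z^n$, $y=z^m$ (equivalently $\langle x,y\rangle$ is cyclic). $G_{<\infty}$ denotes the set of elements of finite order; it induces a connected component of $\mathcal G(\mathbf G)$, called the finite-order component $\Phi$. The center of $\Phi$ is $\mathrm{Cen}(\Phi)=\{x\in G_{<\infty}: x \text{ is adjacent in } \mathcal G(\mathbf G) \text{ to all } y\in G_{<\infty}\setminus\{x\}\}$. The closed neighborhood of a vertex $x$ is $\overline N(x)=\{x\}\cup\{y: y\sim x\}$. For $x,y\in G_{<\infty}$, $x\equiv y$ means $x,y$ have the same closed neighborhood in $\Phi$; $x\approx y$ means $\langle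 x\rangle=\langle y\rangle$. Each $\equiv$-class is a union of $\approx$-classes. (Under $\lvert\mathrm{Cen}(\Phi)\rvert=1$, a $\equiv$-class that is not a single $\approx$-class is either complex, i.e. of the form $\{g\in\langle y\rangle: o(g)\ge p^s\}$ for a prime $p$, an element $y$ of order $p^r$ and $r>s>0$, or infinitely complex, i.e. $\bigcup_{k\ge s}[x_k]_\approx$ with $o(x_k)=p^k$ and $x_k\in\langle x_{k+1}\rangle$ for all $k\ge s$.) *)

From Stdlib Require Import ZArith.

Record Group := {
  carrier :> Type;
  gmul : carrier -> carrier -> carrier;
  gone : carrier;
  ginv : carrier -> carrier;
  gmulA : forall x y z, gmul x (gmul y z) = gmul (gmul x y) z;
  gmul1x : forall x, gmul gone x = x;
  gmulx1 : forall x, gmul x gone = x;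
  gmulVx : forall x, gmul (ginv x) x = gone;
  gmulxV : forall x, gmul x (ginv x) = gone
}.

Section Defs.
Variable G : Group.

Fixpoint npow (x : G) (n : nat) : G :=
  match n with
  | O => gone G
  | S k => gmul G x (npow x k)
  end.

Definition zpow (x : G) (n : Z) : G :=
  match n with
  | Z0 => gone G
  | Zpos p => npow x (Pos.to_nat p)
  | Zneg p => ginv G (npow x (Pos.to_nat p))
  end.

Definition fin_order (x : G) : Prop := exists n : nat, (0 < n)%nat /\ npow x n = gone G.

Definition pow_adj (x y : G) : Prop :=
  x <> y /\
  ((exists n : Z, n <> 0%Z /\ y = zpow x n) \/ (exists n : Z, n <> 0%Z /\ x = zpow y n)).

Definition epow_adj (x y : G) : Prop :=
  x <> y /\ exists (z : G) (n m : Z), x = zpow z n /\ y = zpow z m.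

Definition closed_nbhd (x y : G) : Prop := y = x \/ pow_adj x y.
Definition closed_enbhd (x y : G) : Prop := y = x \/ epow_adj x y.

Definition closed_nbhd_Phi (x y : G) : Prop := fin_order y /\ closed_nbhd x y.

Definition in_Cen (x : G) : Prop :=
  fin_order x /\ forall y, fin_order y -> y <> x -> pow_adj x y.

Definition nequiv (x y : G) : Prop := forall z, closed_nbhd_Phi x z <-> closed_nbhd_Phi y z.

Definition same_cyclic (x y : G) : Prop :=
  forall z, (exists n : Z, z = zpow x n) <-> (exists n : Z, z = zpow y n).

End Defs.

From mathcomp Require Import all_boot zify.
From Stdlib Require Import ZArith Lia Classical Wf_nat.

Set Implicit Arguments.
Unset Strict Implicit.

(* Write [memN t w] when t is a natural power of w, and call u and t linked
   when one is a power of the other.  For w of finite order, [memN t w] means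
   t lies in <w>, and the closed neighbourhood of w in the finite-order
   component Phi is the set of finite-order elements linked to w
   ([nbhd_Phi_linked]).
   Since [x]_equiv is not a single approx-class, it contains x' with the same
   neighbourhood in Phi but <x> <> <x'> ([equiv_partner]); x and x' are then
   linked.  If x were the identity, x' would be central too, contradicting
   |Cen(Phi)| = 1 ([partner_not_one]).  If y is enhanced-adjacent to x, then
   x, y lie in some <z> with z of finite order (as x <> 1), and x, x', y all
   lie in one finite cyclic group <w> ([common_cyclic]).  In <w> of order N
   the subgroup <w^i> has index gcd(i, N) ([memN_cyclic_dvd]), so linking is
   comparability of divisors of N, and a short argument in the divisor
   lattice ([divisor_lattice_comparable], used in [linked_in_cyclic]) shows
   that y is linked to x, i.e. y = x or y is power-adjacent to x.  The other
   inclusion holds since power adjacency implies enhanced adjacency. *)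

(* This uses distributivity of gcd over lcm. *)
Lemma divisor_lattice_comparable a b c : a %| c -> ~~ (c %| a) ->
  (c %| lcmn a b) || (lcmn a b %| c) -> (a %| gcdn b c) || (gcdn b c %| a) ->
  (a %| b) || (b %| a).
Proof.
move=> ac nca Hlcm /orP [a_gcd|gcd_a].
  by rewrite (dvdn_trans a_gcd (dvdn_gcdl _ _)).
case/orP: Hlcm => [c_lcm|lcm_c].
- (* c = gcd(lcm(a,b), c) = lcm(gcd(a,c), gcd(b,c)) = lcm(a, gcd(b,c)) = a *)
  have E : gcdn (lcmn a b) c = c by apply/gcdn_idPr.
  rewrite order.Order.NatDvd.meetUl (gcdn_idPl ac) (lcmn_idPl gcd_a) in E.
  by rewrite E dvdnn in nca.
- move: lcm_c; rewrite dvdn_lcm => /andP [_ bc].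
  by move: gcd_a; rewrite (gcdn_idPl bc) => ->; rewrite orbT.
Qed.

Section PowerGraph.
Variable G : Group.
Local Notation e := (gone G).
Local Notation mul := (gmul G).
Local Notation pw := (npow G).

Lemma npow_add x m n : pw x (m + n) = mul (pw x m) (pw x n).
Proof. by elim: m => [|m IH] /=; rewrite ?gmul1x // IH gmulA. Qed.

Lemma npow1 x : pw x 1 = x.
Proof. by rewrite /= gmulx1. Qed.

Lemma npow_mul x m n : pw x (m * n) = pw (pw x m) n.
Proof. by elim: n => [|n IH]; rewrite ?muln0 // mulnS npow_add IH. Qed.

Lemma npow_one n : pw e n = e.
Proof. by elim: n => [|n IH] //=; rewrite IH gmul1x. Qed.

Lemma npow_zpow w k : pw w k = zpow G w (Z.of_nat k).
Proof. by case: k => // k; rewrite /= SuccNat2Pos.id_succ. Qed.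

Lemma inv_unique a b : mul a b = e -> ginv G a = b.
Proof. by move=> H; rewrite -[ginv G a]gmulx1 -H gmulA gmulVx gmul1x. Qed.

Lemma mul_eq_r a b : mul a b = b -> a = e.
Proof. by move=> H; rewrite -[a]gmulx1 -(gmulxV G b) gmulA H gmulxV. Qed.

Lemma npow_inv a k : mul (pw (ginv G a) k) (pw a k) = e.
Proof.
elim: k => [|k IH]; first by rewrite /= gmul1x.
have -> : pw a k.+1 = mul (pw a k) a by rewrite -addn1 npow_add npow1.
by rewrite /= -gmulA (gmulA _ (pw (ginv G a) k)) IH gmul1x gmulVx.
Qed.

Definition is_order (x : G) (N : nat) : Prop :=
  0 < N /\ pw x N = e /\ forall m, 0 < m -> pw x m = e -> N <= m.

Lemma least_witness (P : nat -> Prop) :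
  (exists n, P n) -> exists n, P n /\ forall m, P m -> n <= m.
Proof.
case=> n; elim/lt_wf_ind: n => n IH Pn.
case: (classic (exists m, (m < n)%coq_nat /\ P m)) => [[m [lt_mn Pm]]|Hmin].
  exact: IH lt_mn Pm.
exists n; split=> // m Pm; rewrite leqNgt; apply/negP => lt_mn.
by apply: Hmin; exists m; split=> //; apply/ltP.
Qed.

Lemma order_exists x : fin_order G x -> exists N, is_order x N.
Proof.
case=> n [n_gt0 Hn].
have [N [[N_gt0 HN] Hmin]] :=
  @least_witness (fun n => 0 < n /\ pw x n = e) (ex_intro _ n (conj (introT ltP n_gt0) Hn)).
by exists N; do 2!split=> //; move=> m m_gt0 Hm; apply: Hmin.
Qed.

Lemma order_dvd x N k : is_order x N -> pw x k = e <-> N %| k.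
Proof.
move=> [N_gt0 [HN Hmin]]; split=> [Hk|Hk]; last first.
  by rewrite -(divnK Hk) mulnC npow_mul HN npow_one.
have Hr : pw x (k %% N) = e.
  by move: Hk; rewrite {1}(divn_eq k N) npow_add mulnC npow_mul HN npow_one gmul1x.
case: (posnP (k %% N)) => [r0|r_gt0]; first by rewrite /dvdn r0.
by have := Hmin _ r_gt0 Hr; rewrite leqNgt ltn_pmod.
Qed.

Lemma npow_inj_mod z N i j : is_order z N -> pw z i = pw z j -> i = j %[mod N].
Proof.
move=> Hz; wlog le_ji : i j / j <= i.
  by move=> W; case: (leqP j i) => [le|/ltnW le] H; [apply: W | symmetry; apply: W].
move=> H; apply/eqP; rewrite eqn_mod_dvd //; apply/(order_dvd _ Hz).
by apply: (@mul_eq_r _ (pw z j)); rewrite -npow_add subnK.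
Qed.

Definition memN (t w : G) : Prop := exists k, t = pw w k.

Lemma memN_refl a : memN a a.
Proof. by exists 1; rewrite npow1. Qed.

Lemma memN_trans a b c : memN a b -> memN b c -> memN a c.
Proof. by move=> [k ->] [l ->]; exists (l * k); rewrite npow_mul. Qed.

Lemma memN_fin a c : fin_order G c -> memN a c -> fin_order G a.
Proof.
move=> [N [N_gt0 HN]] [k ->]; exists N; split=> //.
by rewrite -npow_mul mulnC npow_mul HN npow_one.
Qed.

Lemma zpow_memN w n : fin_order G w -> memN (zpow G w n) w.
Proof.
move=> /order_exists [N [N_gt0 [HN _]]].
case: n => [|p|p] /=; [by exists 0 | by exists (Pos.to_nat p) |].
exists (N * Pos.to_nat p - Pos.to_nat p); apply: inv_unique; rewrite -npow_add.
have -> : Pos.to_nat p + (N * Pos.to_nat p - Pos.to_nat p) = N * Pos.to_nat p by nia.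
by rewrite npow_mul HN npow_one.
Qed.

Lemma memN_zpow_nz w t : fin_order G w -> memN t w ->
  exists n, n <> 0%Z /\ t = zpow G w n.
Proof.
move=> /order_exists [N [N_gt0 [HN _]]] [k ->].
case: (posnP k) => [->|k_gt0].
  by exists (Z.of_nat N); split; [lia | rewrite -npow_zpow HN].
by exists (Z.of_nat k); split; [lia | apply: npow_zpow].
Qed.

Lemma zpow_iff_memN t w : fin_order G w -> (exists n, t = zpow G w n) <-> memN t w.
Proof.
move=> fw; split; first by case=> n ->; apply: zpow_memN.
by case=> k ->; exists (Z.of_nat k); apply: npow_zpow.
Qed.

Lemma zpow_base_fin z n :
  fin_order G (zpow G z n) -> zpow G z n <> e -> fin_order G z.
Proof.
have p_gt0 := Pos2Nat.is_pos.
case: n => [|p|p] /= [k [k_gt0 Hk]] ne1 //; exists (Pos.to_nat p * k).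
  by split; [have := p_gt0 p; lia | rewrite npow_mul].
split; first by have := p_gt0 p; lia.
by have := npow_inv (pw z (Pos.to_nat p)) k; rewrite Hk gmul1x npow_mul.
Qed.

Definition linked (u t : G) : Prop := memN t u \/ memN u t.

Lemma nbhd_Phi_linked w t : fin_order G w ->
  closed_nbhd_Phi G w t <-> fin_order G t /\ linked w t.
Proof.
move=> fw; split.
  case=> ft H; split=> //; case: H => [->|[_ [[n [_ E]]|[n [_ E]]]]].
  - by left; apply: memN_refl.
  - by left; rewrite E; apply: zpow_memN.
  - by right; rewrite E; apply: zpow_memN.
case=> ft H; split=> //; case: (classic (t = w)) => [->|ne]; [by left | right].
split; first by move=> E; apply: ne.
by case: H => H; [left | right]; apply: memN_zpow_nz.
Qed.

Lemma nequiv_linked u v t : fin_order G u -> fin_order G v -> nequiv G u v ->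
  fin_order G t -> linked u t <-> linked v t.
Proof.
move=> fu fv Huv ft.
have := Huv t; rewrite (nbhd_Phi_linked t fu) (nbhd_Phi_linked t fv); tauto.
Qed.

Lemma same_cyclic_memN u v : fin_order G u -> fin_order G v ->
  memN u v -> memN v u -> same_cyclic G u v.
Proof.
move=> fu fv uv vu t; rewrite (zpow_iff_memN t fu) (zpow_iff_memN t fv).
by split=> H; [apply: memN_trans H uv | apply: memN_trans H vu].
Qed.

Lemma nequiv_same_cyclic u v : fin_order G u -> fin_order G v ->
  same_cyclic G u v -> nequiv G u v.
Proof.
move=> fu fv S.
have gen w : exists n, w = zpow G w n by exists 1%Z; rewrite /= gmulx1.
have uv : memN u v by apply/(zpow_iff_memN u fv)/S; apply: gen.
have vu : memN v u by apply/(zpow_iff_memN v fu)/S; apply: gen.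
move=> t; rewrite (nbhd_Phi_linked t fu) (nbhd_Phi_linked t fv) /linked.
split=> [[ft [H|H]]|[ft [H|H]]]; split=> //.
- by left; apply: memN_trans H uv.
- by right; apply: memN_trans vu H.
- by left; apply: memN_trans H vu.
- by right; apply: memN_trans uv H.
Qed.

(* Inside the cyclic group <z> of order N, the subgroup <z^i> has index
   gcd(i, N); so z^j lies in <z^i> iff gcd(i, N) divides gcd(j, N). *)
Lemma memN_cyclic_dvd z N : is_order z N -> forall i j,
  memN (pw z j) (pw z i) <-> gcdn i N %| gcdn j N.
Proof.
move=> Hz i j; have [N_gt0 [HN _]] := Hz.
rewrite dvdn_gcd dvdn_gcdr andbT; split.
  case=> k; rewrite -npow_mul => /(npow_inj_mod Hz) Hm.
  rewrite /dvdn -(modn_dvdm j (dvdn_gcdr i N)) Hm (modn_dvdm _ (dvdn_gcdr i N)).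
  by rewrite -/(dvdn _ _) dvdn_mulr // dvdn_gcdl.
case: (posnP i) => [->|i_gt0].
  by rewrite gcd0n => /(order_dvd _ Hz) ->; exists 0.
move=> Hd; case: (egcdnP N i_gt0) => km kn Bezout _.
exists (km * (j %/ gcdn i N)); rewrite -npow_mul.
have -> : i * (km * (j %/ gcdn i N)) = N * (kn * (j %/ gcdn i N)) + j.
  by rewrite -{3}(divnK Hd) mulnA [i * km]mulnC Bezout; nia.
by rewrite npow_add npow_mul HN npow_one gmul1x.
Qed.

(* Test elements: w^lcm(a,b) (in <u>, hence linked to v)
   and w^gcd(b,c) (containing v, hence linked to u), where a, b, c are the
   subgroup indices of u, y, v. *)
Lemma linked_in_cyclic_proper w u v y : fin_order G w ->
  memN u w -> memN v w -> memN y w ->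
  memN v u -> ~ memN u v ->
  (forall t, memN t w -> linked u t <-> linked v t) ->
  linked u y.
Proof.
move=> /order_exists [N Hw] [iu ->] [iv ->] [iy ->] vu nuv Hsame.
have M := memN_cyclic_dvd Hw.
have in_w k : memN (pw w k) w by exists k.
move/M: vu => ac; have nca : ~~ (gcdn iv N %| gcdn iu N) by apply/negP => /M.
set a := gcdn iu N in ac nca *; set c := gcdn iv N in ac nca *.
set b := gcdn iy N.
have idx d : d %| N -> gcdn d N = d by move=> dN; apply/gcdn_idPl.
have aN : a %| N by apply: dvdn_gcdr.
have bN : b %| N by apply: dvdn_gcdr.
have lcm_test : (c %| lcmn a b) || (lcmn a b %| c).
  have Hl : gcdn (lcmn a b) N = lcmn a b by apply: idx; rewrite dvdn_lcm aN bN.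
  have : linked (pw w iv) (pw w (lcmn a b)).
    apply/(Hsame _ (in_w _)); left; apply/M; by rewrite Hl dvdn_lcml.
  by case=> /M; rewrite Hl => ->; rewrite ?orbT.
have gcd_test : (a %| gcdn b c) || (gcdn b c %| a).
  have Hg := idx _ (dvdn_trans (dvdn_gcdl b c) bN).
  have : linked (pw w iu) (pw w (gcdn b c)).
    apply/(Hsame _ (in_w _)); right; apply/M; by rewrite Hg dvdn_gcdr.
  by case=> /M; rewrite Hg => ->; rewrite ?orbT.
case/orP: (divisor_lattice_comparable ac nca lcm_test gcd_test) => H.
- by left; apply/M.
- by right; apply/M.
Qed.

Lemma linked_in_cyclic w u v y : fin_order G w ->
  memN u w -> memN v w -> memN y w ->
  linked u v -> ~ (memN u v /\ memN v u) ->
  (forall t, memN t w -> linked u t <-> linked v t) ->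
  linked u y.
Proof.
move=> fw uw vw yw [vu|uv] Hproper Hsame.
- apply: (linked_in_cyclic_proper fw uw vw yw vu) Hsame.
  by move=> uv; apply: Hproper.
- apply/(Hsame _ yw); apply: (linked_in_cyclic_proper fw vw uw yw uv).
    by move=> vu; apply: Hproper.
  by move=> t tw; rewrite Hsame.
Qed.

Lemma pow_adj_epow_adj x y : pow_adj G x y -> epow_adj G x y.
Proof.
case=> ne [[n [_ E]]|[n [_ E]]]; split=> //.
- by exists x, 1%Z, n; split=> //; rewrite /= gmulx1.
- by exists y, n, 1%Z; split=> //; rewrite /= gmulx1.
Qed.

Lemma fin_order_one : fin_order G e.
Proof. by exists 1; split; [apply/ltP | apply: npow1]. Qed.

Lemma one_in_Cen : in_Cen G e.
Proof.
split; first exact: fin_order_one.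
move=> t ft ne; split; first by move=> E; apply: ne.
by right; apply: memN_zpow_nz => //; exists 0.
Qed.

Lemma nequiv_one_in_Cen v : fin_order G v -> nequiv G e v -> in_Cen G v.
Proof.
move=> fv Hv; split=> // t ft ne.
have : closed_nbhd_Phi G v t.
  by apply/Hv/(nbhd_Phi_linked t fin_order_one); split=> //; right; exists 0.
by case=> _ [E|].
Qed.

Lemma equiv_partner x : fin_order G x ->
  ~ (forall y, fin_order G y -> (nequiv G x y <-> same_cyclic G x y)) ->
  exists x', [/\ fin_order G x', nequiv G x x' & ~ same_cyclic G x x'].
Proof.
move=> fx Hcls; apply: NNPP => Hnone; apply: Hcls => y fy; split.
  by move=> Hxy; apply: NNPP => Hsc; apply: Hnone; exists y.
exact: nequiv_same_cyclic.
Qed.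

Lemma partner_not_one x x' :
  (exists c : G, forall y : G, in_Cen G y <-> y = c) ->
  fin_order G x' -> nequiv G x x' -> ~ same_cyclic G x x' -> x <> e.
Proof.
move=> [c Hc] fx' Hxx' Hsc Ex; apply: Hsc; rewrite Ex in Hxx' *.
have -> : x' = e.
  by rewrite (proj1 (Hc _) (nequiv_one_in_Cen fx' Hxx')) -(proj1 (Hc _) one_in_Cen).
by move=> t.
Qed.

(* If x, x', y are as in the theorem, with x, y in <z>, then all three lie
   in one finite cyclic group: <z> itself, or <x'> when <z> <= <x'>. *)
Lemma common_cyclic x x' y z n m : fin_order G x -> fin_order G x' ->
  nequiv G x x' -> x <> e -> x = zpow G z n -> y = zpow G z m ->
  exists w, [/\ fin_order G w, memN x w, memN x' w & memN y w].
Proof.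
move=> fx fx' Hxx' xne1 Ex Ey.
have fz : fin_order G z by apply: (@zpow_base_fin z n); rewrite -Ex.
have xz : memN x z by rewrite Ex; apply: zpow_memN.
have yz : memN y z by rewrite Ey; apply: zpow_memN.
have : linked x' z by apply/(nequiv_linked fx fx' Hxx' fz); right.
case=> [zx'|x'z].
- by exists x'; split=> //; [apply: memN_trans xz zx' | apply: memN_refl
                              | apply: memN_trans yz zx'].
- by exists z.
Qed.

End PowerGraph.

Theorem mainTheorem1 (G : Group)
  (HCen : exists c : G, forall y : G, in_Cen G y <-> y = c)
  (x : G) (Hx : fin_order G x)
  (Hcls : ~ (forall y : G, fin_order G y -> (nequiv G x y <-> same_cyclic G x y))) :
  forall y : G, closed_nbhd G x y <-> closed_enbhd G x y.
Proof.
move=> y; split; first by case=> [->|/pow_adj_epow_adj]; [left | right].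
case=> [->|[_ [z [n [m [Ex Ey]]]]]]; first by left.
have [x' [fx' Hxx' Hsc]] := equiv_partner Hx Hcls.
have x_ne1 := partner_not_one HCen fx' Hxx' Hsc.
have [w [fw xw x'w yw]] := common_cyclic Hx fx' Hxx' x_ne1 Ex Ey.
have fy := memN_fin fw yw.
have Hlink : linked x y.
  apply: (linked_in_cyclic fw xw x'w yw).
  - by apply/(nequiv_linked Hx fx' Hxx' fx'); left; apply: memN_refl.
  - by case=> xx' x'x; apply: Hsc; apply: same_cyclic_memN.
  - by move=> t tw; apply: (nequiv_linked Hx fx' Hxx' (memN_fin fw tw)).
by case: (proj2 (nbhd_Phi_linked y Hx) (conj fy Hlink)) => _.
Qed.
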